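(* Let $X$ be a real reflexive Banach space and $T:X\rightrightarrows X^{\ast}$ maximally monotone. Then for every $h\in\mathcal{H}(T)$, $\epsilon\ge0$ and $x\in X$, $\breve{T}_h(\epsilon,x)\subset T^{\mathrm{BE}}(\epsilon,x)$; in particular $\breve{T}_{\mathcal{F}_T}(\epsilon,x)\subset T^{\mathrm{BE}}(\epsilon,x)$.
   Context: $X^{\ast}$ is the dual of $X$ with pairing $\langle\cdot,\cdot\rangle$. The dual of $X\times X^{\ast}$ is identified with $X^{\ast}\times X$ via $\langle (x,x^{\ast}),(y^{\ast},y)\rangle=\langle x,y^{\ast}\rangle+\langle y,x^{\ast}\rangle$. $\mathcal{H}(T)$ is the family of lower semicontinuous convex $h:X\times X^{\ast}\to\mathbb{R}\cup\{+\infty\}$ with $h(x,x^{\ast})\ge\langle x,x^{\ast}\rangle$ everywhere and equality whenever $x^{\ast}\in T(x)$. For $\eta\ge0$, $\partial_\eta h(z)$ is the set of $(y^{\ast},y)\in X^{\ast}\times X$ with $h(w,w^{\ast})\ge h(z)+\langle (w,w^{\ast})-z,(y^{\ast},y)\rangle-\eta$ for all $(w,w^{\ast})$ when $h(z)<\infty$, and $\emptyset$ otherwise. $\breve{T}_h(\epsilon,x):=\{x^{\ast}:(x^{\ast},x)\in\partial_{2\epsilon}h(x,x^{\ast})\}$. The Fitzpatrick function is $\mathcal{F}_T(x,x^{\ast})=\sup\{\langle y,x^{\ast}\rangle+\langle x-y,y^{\ast}\rangle:(y,y^{\ast})\in\mathrm{gph}(T)\}$ (it belongs to $\mathcal{H}(T)$).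 $T^{\mathrm{BE}}(\epsilon,x):=\{x^{\ast}: \langle y-x,y^{\ast}-x^{\ast}\rangle\ge-\epsilon\ \forall (y,y^{\ast})\in\mathrm{gph}(T)\}$. *)

From HB Require Import structures.
From mathcomp Require Import all_boot all_order all_algebra.
From mathcomp Require Import all_classical all_reals all_analysis.
Set Implicit Arguments. Unset Strict Implicit. Unset Printing Implicit Defensive.
Import Order.TTheory GRing.Theory Num.Theory.
Import numFieldNormedType.Exports.
Local Open Scope classical_set_scope.
Local Open Scope ring_scope.

(* Topological dual X^* of a real normed space X: continuous linear functionals.
   The duality pairing <x, x^*> is the evaluation x^* x. *)
Record dual (R : realType) (X : normedModType R) := Dual {
  dfun :> X -> R ;
  dfun_linear : forall (a : R) (u v : X), dfun (a *: u + v) = a * dfun u + dfun v ;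
  dfun_cont : continuous dfun }.

Section defs.
Variables (R : realType) (X : normedModType R).

Definition ddist (f g : dual X) : R :=
  sup [set `|f x - g x| | x in [set x : X | `|x| <= 1]].

Definition dnorm (f : dual X) : R :=
  sup [set `|f x| | x in [set x : X | `|x| <= 1]].

(* X is reflexive: every continuous linear functional on (X^*, ||.||_* ) is the
   evaluation at some point of X (canonical embedding X -> X^** is onto). *)
Definition reflexive_space : Prop :=
  forall phi : dual X -> R,
    (forall (a : R) (f g k : dual X), (forall x, k x = a * f x + g x) ->
        phi k = a * phi f + phi g) ->
    (exists M : R, forall f, `|phi f| <= M * dnorm f) ->
    exists x : X, forall f, phi f = f x.

Definition monotone (T : X -> set (dual X)) : Prop :=
  forall x y (xs ys : dual X), T x xs -> T y ys -> 0 <= ys (y - x) - xs (y - x).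

Definition maximal_monotone (T : X -> set (dual X)) : Prop :=
  monotone T /\
  forall S : X -> set (dual X), monotone S -> (forall x, T x `<=` S x) ->
    forall x, S x = T x.

Definition convex_fun (h : X * dual X -> \bar R) : Prop :=
  forall (z1 z2 z : X * dual X) (l : R), 0 < l < 1 ->
    z.1 = l *: z1.1 + (1 - l) *: z2.1 ->
    (forall x, z.2 x = l * z1.2 x + (1 - l) * z2.2 x) ->
    (h z <= l%:E * h z1 + (1 - l)%:E * h z2)%E.

Definition lsc_fun (h : X * dual X -> \bar R) : Prop :=
  forall (z : X * dual X) (t : \bar R), (t < h z)%E ->
    exists2 d : R, 0 < d & forall w : X * dual X,
      `|w.1 - z.1| < d -> ddist w.2 z.2 < d -> (t < h w)%E.

Definition HT (T : X -> set (dual X)) : set (X * dual X -> \bar R) :=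
  [set h | convex_fun h /\ lsc_fun h /\
           (forall z : X * dual X, ((z.2 z.1)%:E <= h z)%E) /\
           (forall x (xs : dual X), T x xs -> h (x, xs) = (xs x)%:E)].

(* eta-subdifferential; (ys, y) in X^* x X, pairing
   <(w,ws),(ys,y)> = <w,ys> + <y,ws> *)
Definition esubdiff (eta : R) (h : X * dual X -> \bar R) (z : X * dual X)
    : set (dual X * X) :=
  [set p : dual X * X | (h z < +oo)%E /\
     forall w : X * dual X,
       (h z + (p.1 (w.1 - z.1) + (w.2 p.2 - z.2 p.2) - eta)%:E <= h w)%E].

Definition Tbreve (h : X * dual X -> \bar R) (eps : R) (x : X) : set (dual X) :=
  [set xs | esubdiff (2 * eps) h (x, xs) (xs, x)].

Definition fitzpatrick (T : X -> set (dual X)) (z : X * dual X) : \bar R :=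
  ereal_sup [set r | exists (y : X) (ys : dual X),
                      T y ys /\ r = (z.2 y + ys (z.1 - y))%:E].

Definition TBE (T : X -> set (dual X)) (eps : R) (x : X) : set (dual X) :=
  [set xs | forall y (ys : dual X), T y ys -> - eps <= ys (y - x) - xs (y - x)].

End defs.

From Pilot Require Import Defs.
From HB Require Import structures.
From mathcomp Require Import all_boot all_order all_algebra.
From mathcomp Require Import all_classical all_reals all_analysis.
From mathcomp Require Import lra ring.
Set Implicit Arguments. Unset Strict Implicit. Unset Printing Implicit Defensive.
Import Order.TTheory GRing.Theory Num.Theory.
Import numFieldNormedType.Exports.
Local Open Scope classical_set_scope.
Local Open Scope ring_scope.

(* Both inclusions hold for every h that majorizes the Fitzpatrick function
   F_T and equals the duality pairing on gph T: writing
   D := <y - x, y^* - x^*> for (y, y^* ) in gph T, the bound h >= F_T gives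
   -D <= h(x, x^* ) - <x, x^*>, while the 2 eps-subgradient inequality tested
   at (y, y^* ) gives h(x, x^* ) - <x, x^*> <= 2 eps + D; hence D >= -eps.
   F_T itself qualifies as soon as T is monotone.  Every h in H(T) majorizes
   F_T: along the segment from (x, x^* ) to (y, y^* ), convexity and
   h >= pairing give h(x, x^* ) - <x, x^*> + t D >= 0 for 0 < t < 1, and
   letting t tend to 1 yields h(x, x^* ) >= <x, y^*> + <y, x^*> - <y, y^*>. *)

Lemma affine_ge0_right_end (R : realFieldType) (c d : R) :
  (forall t, 0 < t < 1 -> 0 <= c + t * d) -> 0 <= c + d.
Proof.
move=> affine_ge0; rewrite leNgt; apply/negP => cd_lt0.
have half_ge0 := affine_ge0 (1 / 2) ltac:(apply/andP; split; lra).
have d_lt0 : d < 0 by lra.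
have s_lt1 : c / - d < 1 by rewrite ltr_pdivrMr; lra.
have s_gt0 : 0 < c / - d by rewrite divr_gt0 //; lra.
have := affine_ge0 ((1 + c / - d) / 2) ltac:(apply/andP; split; lra).
have -> : c + (1 + c / - d) / 2 * d = (c + d) / 2 by field; lra.
lra.
Qed.

Section dual_space.
Variables (R : realType) (X : normedModType R).

Lemma dfun0 (f : dual X) : f 0 = 0.
Proof. by have := dfun_linear f 1 0 0; rewrite scaler0 addr0 mul1r; lra. Qed.

Lemma dfunD (f : dual X) u v : f (u + v) = f u + f v.
Proof. by rewrite -[u]scale1r dfun_linear mul1r scale1r. Qed.

Lemma dfunZ (f : dual X) a u : f (a *: u) = a * f u.
Proof. by rewrite -[a *: u]addr0 dfun_linear dfun0 addr0. Qed.

Lemma dfunB (f : dual X) u v : f (u - v) = f u - f v.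
Proof. by rewrite dfunD -scaleN1r dfunZ mulN1r. Qed.

Definition dual_mix_fun (t : R) (f g : dual X) (u : X) : R :=
  t * f u + (1 - t) * g u.

Lemma dual_mix_linear t f g (a : R) (u v : X) :
  dual_mix_fun t f g (a *: u + v) = a * dual_mix_fun t f g u + dual_mix_fun t f g v.
Proof. by rewrite /dual_mix_fun !dfun_linear; ring. Qed.

Lemma dual_mix_cont t f g : continuous (dual_mix_fun t f g).
Proof. by move=> u; apply: cvgD; apply: cvgM; by [apply: cvg_cst | apply: dfun_cont]. Qed.

Definition dual_mix t f g : dual X :=
  Dual (@dual_mix_linear t f g) (@dual_mix_cont t f g).

End dual_space.

Section representative_functions.
Variables (R : realType) (X : normedModType R) (T : X -> set (dual X)).

Lemma fitzpatrick_ge (x : X) (xs : dual X) {y : X} {ys : dual X} : T y ys ->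
  ((xs y + ys (x - y))%:E <= fitzpatrick T (x, xs))%E.
Proof. by move=> Tyys; apply: ereal_sup_ubound; exists y, ys. Qed.

Lemma fitzpatrick_gph (y : X) (ys : dual X) : Defs.monotone T -> T y ys ->
  fitzpatrick T (y, ys) = (ys y)%:E.
Proof.
move=> monoT Tyys; apply/eqP; rewrite eq_le; apply/andP; split.
  apply: ge_ereal_sup => _ [y' [ys' [Ty'ys' ->]]].
  by rewrite lee_fin; have := monoT _ _ _ _ Ty'ys' Tyys; rewrite !dfunB; lra.
by have := fitzpatrick_ge y ys Tyys; rewrite subrr dfun0 addr0.
Qed.

Lemma convex_pairing_gap (h : X * dual X -> \bar R) (x y : X) (xs ys : dual X)
    (a b t : R) :
  convex_fun h -> (forall z : X * dual X, ((z.2 z.1)%:E <= h z)%E) ->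
  h (x, xs) = a%:E -> h (y, ys) = b%:E -> 0 < t < 1 ->
  0 <= t * (b - ys y) + (1 - t) * (a - xs x) + t * (1 - t) * (ys (y - x) - xs (y - x)).
Proof.
move=> hconv hlow hx hy t01.
pose zt := (t *: y + (1 - t) *: x, dual_mix t ys xs).
have gap := le_trans (hlow zt) (hconv (y, ys) (x, xs) zt t t01 erefl (fun => erefl)).
rewrite hx hy -!EFinM -EFinD lee_fin /= /dual_mix_fun !dfunD !dfunZ in gap.
rewrite !dfunB; set lhs := (X in 0 <= X).
have -> : lhs = t * b + (1 - t) * a -
    (t * (t * ys y + (1 - t) * ys x) + (1 - t) * (t * xs y + (1 - t) * xs x)).
  by rewrite /lhs; ring.
by rewrite subr_ge0.
Qed.

Lemma HT_ge_fitzpatrick h : HT T h -> forall z, (fitzpatrick T z <= h z)%E.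
Proof.
move=> [hconv [_ [hlow hgph]]] [x xs].
apply: ge_ereal_sup => _ [y [ys [Tyys ->]]] /=.
case hx: (h (x, xs)) => [a| |]; last 2 first.
- exact: leey.
- by have := hlow (x, xs); rewrite hx.
rewrite lee_fin; set D := ys (y - x) - xs (y - x).
suff : 0 <= (a - xs x) + D by rewrite /D !dfunB; lra.
apply: affine_ge0_right_end => t t01.
have := convex_pairing_gap hconv hlow hx (hgph _ _ Tyys) t01.
rewrite subrr mulr0 add0r -/D [t * (1 - t)]mulrC -mulrA -mulrDr pmulr_rge0 //.
by rewrite subr_gt0; case/andP: t01.
Qed.

Lemma Tbreve_sub_TBE h eps x :
  (forall z, (fitzpatrick T z <= h z)%E) ->
  (forall y ys, T y ys -> h (y, ys) = (ys y)%:E) ->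
  Tbreve h eps x `<=` TBE T eps x.
Proof.
move=> h_ge_fitz hgph xs [hx_fin subgrad] y ys Tyys.
have := le_trans (fitzpatrick_ge x xs Tyys) (h_ge_fitz (x, xs)).
case: (h (x, xs)) hx_fin subgrad => [a| |] //= _ subgrad.
have := subgrad (y, ys); rewrite hgph // /= -EFinD !lee_fin !dfunB.
lra.
Qed.

End representative_functions.

Theorem corollary3p3 (R : realType) (X : completeNormedModType R)
    (T : X -> set (dual X)) :
  reflexive_space X -> maximal_monotone T ->
  (forall h, HT T h -> forall (eps : R) (x : X), 0 <= eps ->
      Tbreve h eps x `<=` TBE T eps x) /\
  (forall (eps : R) (x : X), 0 <= eps ->
      Tbreve (fitzpatrick T) eps x `<=` TBE T eps x).
Proof.
move=> _ [monoT _]; split.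
- move=> h hHT eps x _; apply: Tbreve_sub_TBE.
    exact: HT_ge_fitzpatrick.
  by case: hHT => [_ [_ [_ hgph]]].
- move=> eps x _; apply: Tbreve_sub_TBE => // y ys.
  exact: fitzpatrick_gph.
Qed.
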